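(* Let $(\mathcal{V},\mathcal{B})$ be a Steiner triple system (a $(2,3,V)$-Steiner system) in which every point lies in exactly $R$ blocks, with embedding operators $\{\mathbf{E}_v\}_{v\in\mathcal{V}}$. Let $\{\varphi_s\}_{s=1}^{R+1}$ be a unimodular simplex in $\mathbb{C}^R$ with Naimark complement $\{a_s\}_{s=1}^{R+1}\subset\mathbb{C}$, and let $\{\psi_t\}_{t=1}^{V+1}$ be a unimodular simplex in $\mathbb{C}^\mathcal{V}$ with Naimark complement $\{b_t\}_{t=1}^{V+1}\subset\mathbb{C}$. Then the ensemble \[ \Big\{\mathbf{E}_v\varphi_s\oplus\sqrt{2}\,a_s\delta_v\oplus 0\Big\}_{s\in[R+1],\ v\in\mathcal{V}} \cup\Big\{0_\mathcal{B}\oplus\sqrt{\tfrac{1}{2}}\,\psi_t\oplus\sqrt{\tfrac{3}{2}}\,b_t\Big\}_{t=1}^{V+1} \] forms an equiangular tight frame in $\mathbb{C}^\mathcal{B}\oplus\mathbb{C}^\mathcal{V}\oplus\mathbb{C}$.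
   Context: A $(2,K,V)$-Steiner system is a set $\mathcal{V}$ of $V$ points with a collection $\mathcal{B}$ of $K$-element subsets (blocks) such that every 2-element subset of $\mathcal{V}$ lies in exactly one block; each point then lies in the same number $R$ of blocks. For a finite set $\mathcal{S}$, $\{\delta_s\}_{s\in\mathcal{S}}$ is the standard orthonormal basis of $\mathbb{C}^\mathcal{S}$. For $v\in\mathcal{V}$, an embedding operator $\mathbf{E}_v\colon\mathbb{C}^R\to\mathbb{C}^\mathcal{B}$ is a linear map sending $\{\delta_r\}_{r=1}^R$ bijectively onto $\{\delta_b: b\in\mathcal{B}, v\in b\}$. A complex Hadamard matrix of size $n$ is an $n\times n$ matrix $\mathbf{H}$ with entries of modulus 1 and $\mathbf{H}\mathbf{H}^*=n\mathbf{I}$. A unimodular simplex in $\mathbb{C}^{n-1}$ is the sequence of $n$ columns of the matrix obtained by deleting one row of an $n\times n$ complex Hadamard matrix; the entries of the deleted row, indexed by column, form its Naimark complement. An equiangular tight frame (ETF) in a finite-dimensional Hilbert space $\mathcal{H}$ is a finite sequence $\{\phi_i\}_{i=1}^N$ of nonzero vectors of equal norm such that $|\langle\phi_i,\phi_j\rangle|$ is the same for all $i\neq j$ and the frame operator $x\mapsto\sum_i\langle x,\phi_i\rangle\phi_i$ is a scalar multiple of the identity on $\mathcal{H}$. *)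

From HB Require Import structures.
From mathcomp Require Import all_boot all_order all_algebra.
Set Implicit Arguments. Unset Strict Implicit. Unset Printing Implicit Defensive.
Import Order.TTheory GRing.Theory Num.Theory.
Local Open Scope ring_scope.

Definition dotv (C : numClosedFieldType) (d : nat) (x y : 'cV[C]_d) : C :=
  \sum_(i < d) x i 0 * (y i 0)^*.

Definition adjmx (C : numClosedFieldType) m n (A : 'M[C]_(m, n)) : 'M[C]_(n, m) :=
  (map_mx (fun z => z^*) A)^T.

Definition is_complex_hadamard (C : numClosedFieldType) (n : nat) (H : 'M[C]_n) :=
  (forall i j, `|H i j| = 1) /\ H *m adjmx H = (n%:R)%:M.

(* unimodular simplex in C^n obtained from an (n+1)x(n+1) Hadamard matrix H by
   deleting row k: s-th vector, and its Naimark complement entry *)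
Definition simplex_vec (C : numClosedFieldType) (n : nat) (H : 'M[C]_n.+1)
  (k : 'I_n.+1) (s : 'I_n.+1) : 'cV[C]_n := \col_(r < n) H (lift k r) s.
Definition naimark (C : numClosedFieldType) (n : nat) (H : 'M[C]_n.+1)
  (k : 'I_n.+1) (s : 'I_n.+1) : C := H k s.

Definition is_ETF (C : numClosedFieldType) (I : finType) (d : nat)
  (phi : I -> 'cV[C]_d) : Prop :=
  [/\ forall i, phi i != 0,
      forall i j, dotv (phi i) (phi i) = dotv (phi j) (phi j),
      (forall i j i' j', i != j -> i' != j' ->
          `|dotv (phi i) (phi j)| = `|dotv (phi i') (phi j')|) &
      exists c : C, forall x : 'cV[C]_d,
          \sum_(i : I) dotv x (phi i) *: phi i = c *: x].

Definition is_STS (V nb : nat) (blk : 'I_nb -> {set 'I_V}) : Prop :=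
  [/\ injective blk,
      forall b, #|blk b| = 3%N &
      forall x y : 'I_V, x != y ->
        exists! b : 'I_nb, (x \in blk b) && (y \in blk b)].

Definition is_embedding (C : numClosedFieldType) (V nb R : nat)
  (blk : 'I_nb -> {set 'I_V}) (v : 'I_V) (E : 'M[C]_(nb, R)) : Prop :=
  exists f : 'I_R -> 'I_nb,
    [/\ injective f,
        forall b, (v \in blk b) <-> (exists r, f r = b) &
        E = \matrix_(b, r) (b == f r)%:R].

Definition ensemble (C : numClosedFieldType) (V nb R : nat)
  (E : 'I_V -> 'M[C]_(nb, R)) (H1 : 'M[C]_R.+1) (k1 : 'I_R.+1)
  (H2 : 'M[C]_V.+1) (k2 : 'I_V.+1)
  (i : ('I_R.+1 * 'I_V) + 'I_V.+1) : 'cV[C]_(nb + (V + 1)) :=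
  match i with
  | inl (s, v) =>
      col_mx (E v *m simplex_vec H1 k1 s)
        (col_mx ((sqrtC 2 * naimark H1 k1 s) *: (delta_mx v 0 : 'cV[C]_V))
                (0 : 'cV[C]_1))
  | inr t =>
      col_mx (0 : 'cV[C]_nb)
        (col_mx (sqrtC (2^-1) *: simplex_vec H2 k2 t)
                (const_mx (sqrtC (3 / 2) * naimark H2 k2 t) : 'cV[C]_1))
  end.

From mathcomp Require Import all_boot all_order all_algebra.
From mathcomp Require Import ring zify.
Import Order.TTheory GRing.Theory Num.Theory.
Set Implicit Arguments. Unset Strict Implicit. Unset Printing Implicit Defensive.
Local Open Scope ring_scope.

(* The frame operator is [c] times the identity iff the rows of the synthesis
   matrix are orthogonal of squared norm [c]; we check this block by block in
   the splitting C^B (+) C^V (+) C. The row products come down to the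
   orthogonality of the rows of the two Hadamard matrices, the fact that each
   block has three points and each point lies in R blocks, and V = 2R + 1
   (double counting), which makes all three diagonal blocks equal to
   3(V + 1)/2. For equiangularity, all vectors have squared norm R + 2, and each
   inner product of two distinct vectors collapses to a product of two
   unimodular entries: two distinct points share exactly one block, and for a
   common point (or in the psi part) the simplex Gram entry -a_s a_s'^* is
   compensated by the Naimark coordinate. *)

Section Dotv.
Variable C : numClosedFieldType.

Lemma dotvC n (x y : 'cV[C]_n) : dotv y x = (dotv x y)^*.
Proof.
rewrite /dotv rmorph_sum; apply: eq_bigr => i _.
by rewrite rmorphM /= conjCK mulrC.
Qed.

Lemma dotvZl n a (x y : 'cV[C]_n) : dotv (a *: x) y = a * dotv x y.
Proof. by rewrite /dotv mulr_sumr; apply: eq_bigr => i _; rewrite mxE mulrA. Qed.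

Lemma dotvZr n a (x y : 'cV[C]_n) : dotv x (a *: y) = a^* * dotv x y.
Proof. by rewrite dotvC dotvZl rmorphM /= -dotvC. Qed.

Lemma dotv0l n (y : 'cV[C]_n) : dotv 0 y = 0.
Proof. by rewrite /dotv big1 // => i _; rewrite mxE mul0r. Qed.

Lemma dotv0r n (x : 'cV[C]_n) : dotv x 0 = 0.
Proof. by rewrite dotvC dotv0l conjC0. Qed.

Lemma dotv_col_mx m n (x x' : 'cV[C]_m) (y y' : 'cV[C]_n) :
  dotv (col_mx x y) (col_mx x' y') = dotv x x' + dotv y y'.
Proof.
rewrite /dotv big_split_ord /=; under eq_bigr do rewrite !col_mxEu.
by under [X in _ + X]eq_bigr do rewrite !col_mxEd.
Qed.

Lemma dotv_deltal n (i : 'I_n) (y : 'cV[C]_n) : dotv (delta_mx i 0) y = (y i 0)^*.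
Proof.
rewrite /dotv (bigD1 i) //= big1 ?addr0 => [|j /negbTE ji]; rewrite mxE.
  by rewrite !eqxx mul1r.
by rewrite ji mul0r.
Qed.

Lemma dotv_const1 (a b : C) : dotv (const_mx a : 'cV_1) (const_mx b) = a * b^*.
Proof. by rewrite /dotv big_ord1 !mxE. Qed.

End Dotv.

Section Sums.
Variable C : numClosedFieldType.

Lemma sum_delta_l (T : finType) (i : T) (F : T -> C) : \sum_j (i == j)%:R * F j = F i.
Proof.
rewrite (bigD1 i) //= eqxx mul1r big1 ?addr0 // => j ji.
by rewrite eq_sym (negbTE ji) mul0r.
Qed.

Lemma sum_prod (I J : finType) (F : I * J -> C) :
  \sum_p F p = \sum_i \sum_j F (i, j).
Proof. by rewrite pair_bigA; apply: eq_bigr => -[]. Qed.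

Lemma sum_indicator (T : finType) (A : {set T}) : \sum_t (t \in A)%:R = #|A|%:R :> C.
Proof.
rewrite -sum1_card natr_sum [RHS]big_mkcond.
by apply: eq_bigr => t _; case: (t \in A).
Qed.

Lemma sum_codom_inj (I T : finType) (f : I -> T) (F : T -> C) :
  injective f -> (forall t, t \notin codom f -> F t = 0) ->
  \sum_t F t = \sum_i F (f i).
Proof.
move=> f_inj F0; rewrite (bigID [in codom f]) /= [X in _ + X]big1 ?addr0 //.
by rewrite -big_uniq ?big_image // map_inj_uniq ?enum_uniq.
Qed.

Lemma sum_mul_conj (I : finType) (c d : C) (x y : I -> C) :
  \sum_i (c * x i) * (d * y i)^* = c * d^* * \sum_i x i * (y i)^*.
Proof. by rewrite mulr_sumr; apply: eq_bigr => i _; rewrite rmorphM /= mulrACA. Qed.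

Lemma norm_mul_conj (x y : C) :
  `|x| = 1 -> `|y| = 1 -> `|x * y^*| = 1.
Proof. by move=> x1 y1; rewrite normrM norm_conjC x1 y1 mulr1. Qed.

Lemma conj_sqrtC (x : C) : 0 <= x -> (sqrtC x)^* = sqrtC x.
Proof. by move=> x0; rewrite conj_Creal ?ger0_real ?sqrtC_ge0. Qed.

Lemma sqrtC_mul_conj (x : C) : 0 <= x -> sqrtC x * (sqrtC x)^* = x.
Proof. by move=> x0; rewrite conj_sqrtC // -expr2 sqrtCK. Qed.

End Sums.

Section Hadamard.
Variables (C : numClosedFieldType) (n : nat) (H : 'M[C]_n.+1).
Hypothesis hadH : is_complex_hadamard H.
Variable k : 'I_n.+1.

Lemma hadamard_mul_conj i j : H i j * (H i j)^* = 1.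
Proof. by rewrite -normCK hadH.1 expr1n. Qed.

Lemma hadamard_rows i j : \sum_s H i s * (H j s)^* = (i == j)%:R * n.+1%:R.
Proof.
have := congr1 (fun M : 'M[C]_n.+1 => M i j) hadH.2.
by rewrite !mxE mulr_natl => <-; apply: eq_bigr => s _; rewrite !mxE.
Qed.

Lemma hadamard_cols s s' : \sum_r H r s * (H r s')^* = (s == s')%:R * n.+1%:R.
Proof.
have n0 : (n.+1%:R : C) != 0 by rewrite pnatr_eq0.
have /mulmx1C invH : H *m (n.+1%:R^-1 *: adjmx H) = 1%:M.
  by rewrite -scalemxAr hadH.2 scale_scalar_mx mulVf.
have := congr1 (fun M : 'M[C]_n.+1 => M s' s * n.+1%:R) invH.
rewrite !mxE eq_sym mulr_suml => <-; apply: eq_bigr => r _.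
by rewrite !mxE [RHS]mulrC !mulrA mulfV // mul1r mulrC.
Qed.

Lemma norm_simplex_vec s r : `|simplex_vec H k s r 0| = 1.
Proof. by rewrite mxE hadH.1. Qed.

Lemma norm_naimark s : `|naimark H k s| = 1.
Proof. exact: hadH.1. Qed.

Lemma naimark_mul_conj s : naimark H k s * (naimark H k s)^* = 1.
Proof. exact: hadamard_mul_conj. Qed.

Lemma dotv_simplex_vec s s' :
  dotv (simplex_vec H k s) (simplex_vec H k s') =
  (s == s')%:R * n.+1%:R - naimark H k s * (naimark H k s')^*.
Proof.
rewrite -hadamard_cols (bigD1_ord k) //= addrC addrK.
by apply: eq_bigr => r _; rewrite !mxE.
Qed.

Lemma simplex_vec_rows r r' :
  \sum_s simplex_vec H k s r 0 * (simplex_vec H k s r' 0)^* = (r == r')%:R * n.+1%:R.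
Proof.
rewrite -(inj_eq (@lift_inj _ k)) -hadamard_rows.
by apply: eq_bigr => s _; rewrite !mxE.
Qed.

Lemma simplex_vec_naimark_rows r :
  \sum_s simplex_vec H k s r 0 * (naimark H k s)^* = 0.
Proof.
rewrite (eq_bigr (fun s => H (lift k r) s * (H k s)^*)) => [|s _]; last by rewrite mxE.
by rewrite hadamard_rows eq_sym (negbTE (neq_lift k r)) mul0r.
Qed.

Lemma naimark_rows : \sum_s naimark H k s * (naimark H k s)^* = n.+1%:R.
Proof. by rewrite hadamard_rows eqxx mul1r. Qed.

End Hadamard.

Definition embed_mx (C : numClosedFieldType) nb R (f : 'I_R -> 'I_nb) : 'M[C]_(nb, R) :=
  \matrix_(b, r) (b == f r)%:R.

Section Embedding.
Variables (C : numClosedFieldType) (nb R : nat) (f : 'I_R -> 'I_nb).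
Hypothesis f_inj : injective f.
Local Notation E := (embed_mx C f).

Lemma embed_mx_image (x : 'cV[C]_R) r : (E *m x) (f r) 0 = x r 0.
Proof.
rewrite !mxE (bigD1 r) //= mxE eqxx mul1r big1 ?addr0 // => r' r'r.
by rewrite mxE (inj_eq f_inj) eq_sym (negbTE r'r) mul0r.
Qed.

Lemma embed_mx_out (x : 'cV[C]_R) b : b \notin codom f -> (E *m x) b 0 = 0.
Proof.
move=> bf; rewrite !mxE big1 // => r _; rewrite mxE.
by case: eqP bf => [->|_]; rewrite ?codom_f ?mul0r.
Qed.

Lemma dotv_embed_mx (x y : 'cV[C]_R) : dotv (E *m x) (E *m y) = dotv x y.
Proof.
rewrite /dotv (sum_codom_inj f_inj) => [|b /embed_mx_out->]; last by rewrite mul0r.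
by apply: eq_bigr => r _; rewrite !embed_mx_image.
Qed.

Lemma embed_mx_rows (I : finType) (x : I -> 'cV[C]_R) c :
  (forall r r', \sum_i x i r 0 * (x i r' 0)^* = (r == r')%:R * c) ->
  forall b b', \sum_i (E *m x i) b 0 * ((E *m x i) b' 0)^* =
    (b \in codom f)%:R * (b == b')%:R * c.
Proof.
move=> xrows b b'; have [/codomP[r ->]|bf] := boolP (b \in codom f); last first.
  by rewrite /= !mul0r big1 // => i _; rewrite embed_mx_out ?mul0r.
have [/codomP[r' ->]|b'f] := boolP (b' \in codom f); last first.
  rewrite big1 => [|i _]; last by rewrite (embed_mx_out _ b'f) conjC0 mulr0.
  by case: eqP b'f => [<-|]; rewrite ?codom_f ?mulr0 ?mul0r.
under eq_bigr do rewrite !embed_mx_image.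
by rewrite xrows (inj_eq f_inj) mul1r.
Qed.

Lemma embed_mx_orth_rows (I : finType) (x : I -> 'cV[C]_R) (a : I -> C) :
  (forall r, \sum_i x i r 0 * (a i)^* = 0) ->
  forall b, \sum_i (E *m x i) b 0 * (a i)^* = 0.
Proof.
move=> xa b; have [/codomP[r ->]|bf] := boolP (b \in codom f).
  by under eq_bigr do rewrite embed_mx_image.
by rewrite big1 // => i _; rewrite embed_mx_out ?mul0r.
Qed.

End Embedding.

Lemma dotv_embed_mx_meet (C : numClosedFieldType) nb R (f f' : 'I_R -> 'I_nb) r r'
    (x y : 'cV[C]_R) :
  injective f -> injective f' -> f r = f' r' ->
  (forall b, b \in codom f -> b \in codom f' -> b = f r) ->
  dotv (embed_mx C f *m x) (embed_mx C f' *m y) = x r 0 * (y r' 0)^*.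
Proof.
move=> f_inj f'_inj frr' meet.
rewrite /dotv (sum_codom_inj f_inj) => [|b /embed_mx_out->]; last by rewrite mul0r.
rewrite (bigD1 r) //= embed_mx_image // frr' embed_mx_image // big1 ?addr0 // => q qr.
rewrite (embed_mx_out (f := f')) ?conjC0 ?mulr0 //.
by apply: contraNN qr => /(meet _ (codom_f f q))/f_inj->.
Qed.

Lemma embeddingP (C : numClosedFieldType) V nb R (blk : 'I_nb -> {set 'I_V}) v
    (E : 'M[C]_(nb, R)) :
  is_embedding blk v E ->
  exists2 f, injective f &
    (forall b, (v \in blk b) = (b \in codom f)) /\ E = embed_mx C f.
Proof.
case=> f [f_inj fv ->]; exists f => //; split => // b.
by apply/idP/codomP => [/fv[r <-]|[r ->]]; [exists r | apply/fv; exists r].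
Qed.

Section IsEmbedding.
Variables (C : numClosedFieldType) (V nb R : nat) (blk : 'I_nb -> {set 'I_V}).
Variables (v : 'I_V) (E : 'M[C]_(nb, R)).
Hypothesis embE : is_embedding blk v E.

Lemma embedding_dotv (x y : 'cV[C]_R) : dotv (E *m x) (E *m y) = dotv x y.
Proof. by have [f f_inj [_ ->]] := embeddingP embE; apply: dotv_embed_mx. Qed.

Lemma embedding_rows (I : finType) (x : I -> 'cV[C]_R) c :
  (forall r r', \sum_i x i r 0 * (x i r' 0)^* = (r == r')%:R * c) ->
  forall b b', \sum_i (E *m x i) b 0 * ((E *m x i) b' 0)^* =
    (v \in blk b)%:R * (b == b')%:R * c.
Proof.
have [f f_inj [fv ->]] := embeddingP embE => xrows b b'.
by rewrite fv (embed_mx_rows f_inj xrows).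
Qed.

Lemma embedding_orth_rows (I : finType) (x : I -> 'cV[C]_R) (a : I -> C) :
  (forall r, \sum_i x i r 0 * (a i)^* = 0) ->
  forall b, \sum_i (E *m x i) b 0 * (a i)^* = 0.
Proof. by have [f f_inj [_ ->]] := embeddingP embE; apply: embed_mx_orth_rows. Qed.

End IsEmbedding.

Lemma embedding_meet (C : numClosedFieldType) V nb R (blk : 'I_nb -> {set 'I_V})
    v v' (E E' : 'M[C]_(nb, R)) :
  is_embedding blk v E -> is_embedding blk v' E' ->
  (exists! b, (v \in blk b) && (v' \in blk b)) ->
  exists r r', forall x y, dotv (E *m x) (E' *m y) = x r 0 * (y r' 0)^*.
Proof.
move=> /embeddingP[f f_inj [fv ->]] /embeddingP[f' f'_inj [f'v' ->]].
case=> b0 [/andP[]]; rewrite fv f'v' => /codomP[r ->] /codomP[r' frr'] meet.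
exists r, r' => x y; apply: dotv_embed_mx_meet => // b bf bf'.
by apply/esym/meet; rewrite fv f'v' bf bf'.
Qed.

Lemma steiner_points (V nb R : nat) (blk : 'I_nb -> {set 'I_V}) :
  is_STS blk -> (forall v : 'I_V, #|[set b | v \in blk b]| = R) ->
  'I_V -> V = (2 * R).+1.
Proof.
case=> _ blk3 pair1 deg v.
pose Bv := [set b | v \in blk b].
have one_block w : w \in [set~ v] -> (\sum_(b in Bv) (w \in blk b) = 1)%N.
  rewrite in_setC1 eq_sym => vw; have [b0 [/andP[vb0 wb0] uniq_b0]] := pair1 v w vw.
  rewrite (bigD1 b0) ?inE //= wb0 big1 // => b /andP[]; rewrite inE => vb bb0.
  case wb: (w \in blk b) => //.
  by move: bb0; rewrite -(uniq_b0 b) ?vb ?wb ?eqxx.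
have two_points b : b \in Bv -> (\sum_(w in [set~ v]) (w \in blk b) = 2)%N.
  rewrite inE => vb; rewrite -big_mkcondr (eq_bigl [in blk b :\ v]) => [|w]; last first.
    by rewrite !inE andbC.
  by rewrite sum1_card; have := cardsD1 v (blk b); rewrite blk3 vb add1n => -[].
have : (V.-1 = 2 * R)%N.
  rewrite -[V in V.-1]card_ord -(cardsC1 v) -sum1_card -(eq_bigr _ one_block).
  by rewrite exchange_big (eq_bigr _ two_points) sum_nat_const deg mulnC.
by have := ltn_ord v; lia.
Qed.

Section FrameRows.
Variables (C : numClosedFieldType) (I : finType).

Definition frame_rows_tight d (phi : I -> 'cV[C]_d) (c : C) :=
  forall p q, \sum_i phi i p 0 * (phi i q 0)^* = (p == q)%:R * c.

Definition frame_rows_orth m n (x : I -> 'cV[C]_m) (y : I -> 'cV[C]_n) :=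
  forall p q, \sum_i x i p 0 * (y i q 0)^* = 0.

Lemma tight_frame_of_rows d (phi : I -> 'cV[C]_d) c :
  frame_rows_tight phi c -> forall x, \sum_i dotv x (phi i) *: phi i = c *: x.
Proof.
move=> tight x; apply/matrixP => p j; rewrite ord1 summxE !mxE.
under eq_bigr do rewrite mxE /dotv mulr_suml.
rewrite exchange_big /= (eq_bigr (fun q => (p == q)%:R * (x q 0 * c))) => [|q _].
  by rewrite sum_delta_l mulrC.
rewrite mulrCA -tight mulr_sumr; apply: eq_bigr => i _.
by rewrite mulrAC mulrA.
Qed.

Lemma frame_rows_orth_col_mx m n l (x : I -> 'cV[C]_m) (y : I -> 'cV[C]_n)
    (z : I -> 'cV[C]_l) :
  frame_rows_orth x y -> frame_rows_orth x z ->
  frame_rows_orth x (fun i => col_mx (y i) (z i)).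
Proof.
move=> xy xz p q; rewrite -(splitK q); case: (split q) => q' /=.
  by under eq_bigr do rewrite col_mxEu.
by under eq_bigr do rewrite col_mxEd.
Qed.

Lemma frame_rows_tight_col_mx m n (x : I -> 'cV[C]_m) (y : I -> 'cV[C]_n) c :
  frame_rows_tight x c -> frame_rows_tight y c -> frame_rows_orth x y ->
  frame_rows_tight (fun i => col_mx (x i) (y i)) c.
Proof.
have orth_sym : frame_rows_orth x y -> frame_rows_orth y x.
  move=> xy p q; transitivity ((\sum_i x i q 0 * (y i p 0)^*)^*).
    by rewrite rmorph_sum; apply: eq_bigr => i _; rewrite rmorphM /= conjCK mulrC.
  by rewrite xy conjC0.
move=> tx ty xy p q.
rewrite -(splitK p) -(splitK q); case: (split p) => p'; case: (split q) => q' /=.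
- by under eq_bigr do rewrite !col_mxEu; rewrite tx eq_lshift.
- by under eq_bigr do rewrite col_mxEu col_mxEd; rewrite xy eq_lrshift mul0r.
- by under eq_bigr do rewrite col_mxEd col_mxEu; rewrite orth_sym // eq_rlshift mul0r.
- by under eq_bigr do rewrite !col_mxEd; rewrite ty eq_rshift.
Qed.

End FrameRows.

Section Ensemble.
Variables (C : numClosedFieldType) (V nb R : nat) (blk : 'I_nb -> {set 'I_V}).
Variables (E : 'I_V -> 'M[C]_(nb, R)) (H1 : 'M[C]_R.+1) (k1 : 'I_R.+1).
Variables (H2 : 'M[C]_V.+1) (k2 : 'I_V.+1).

Local Notation phi := (simplex_vec H1 k1).
Local Notation a := (naimark H1 k1).
Local Notation psi := (simplex_vec H2 k2).
Local Notation b := (naimark H2 k2).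
Local Notation ens := (ensemble E H1 k1 H2 k2).
Local Notation index := ('I_R.+1 * 'I_V + 'I_V.+1)%type.

Definition ensemble_blocks (i : index) : 'cV[C]_nb :=
  if i is inl (s, v) then E v *m phi s else 0.

Definition ensemble_points (i : index) : 'cV[C]_V :=
  match i with
  | inl (s, v) => (sqrtC 2 * a s) *: delta_mx v 0
  | inr t => sqrtC 2^-1 *: psi t
  end.

Definition ensemble_last (i : index) : 'cV[C]_1 :=
  if i is inr t then const_mx (sqrtC (3 / 2) * b t) else 0.

Lemma ensembleE (i : index) :
  ens i = col_mx (ensemble_blocks i) (col_mx (ensemble_points i) (ensemble_last i)).
Proof. by case: i => [[]|]. Qed.

Lemma dotv_ensemble_ll s v s' v' :
  dotv (ens (inl (s, v))) (ens (inl (s', v'))) =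
  dotv (E v *m phi s) (E v' *m phi s') + (v == v')%:R * 2 * (a s * (a s')^*).
Proof.
rewrite /= !dotv_col_mx dotv0l addr0 dotvZl dotvZr dotv_deltal mxE eqxx andbT.
rewrite rmorph_nat rmorphM /= -[2 in RHS](@sqrtC_mul_conj C) ?ler0n //; ring.
Qed.

Lemma dotv_ensemble_lr s v t :
  dotv (ens (inl (s, v))) (ens (inr t)) = a s * (psi t v 0)^*.
Proof.
rewrite /= !dotv_col_mx dotv0r dotv0l add0r addr0 dotvZl dotvZr dotv_deltal mxE.
have sqrt2_inv : sqrtC 2 * sqrtC 2^-1 = 1 :> C.
  by rewrite -sqrtCM ?nnegrE ?invr_ge0 ?ler0n // mulfV ?pnatr_eq0 // sqrtC1.
by rewrite conj_sqrtC ?invr_ge0 ?ler0n // mulrACA sqrt2_inv mul1r.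
Qed.

Lemma dotv_ensemble_rr t t' :
  dotv (ens (inr t)) (ens (inr t')) =
  2^-1 * dotv (psi t) (psi t') + 3 / 2 * (b t * (b t')^*).
Proof.
rewrite /= !dotv_col_mx dotv0l add0r dotvZl dotvZr dotv_const1 rmorphM /=.
rewrite mulrA sqrtC_mul_conj ?invr_ge0 ?ler0n // mulrACA sqrtC_mul_conj //.
by rewrite divr_ge0 ?ler0n.
Qed.

Hypotheses (sts : is_STS blk) (deg : forall v : 'I_V, #|[set c | v \in blk c]| = R).
Hypotheses (embE : forall v, is_embedding blk v (E v)).
Hypotheses (had1 : is_complex_hadamard H1) (had2 : is_complex_hadamard H2).

Lemma steiner_points_natr (v : 'I_V) : V.+1%:R = 2 * R.+1%:R :> C.
Proof. by rewrite (steiner_points sts deg v) -natrM mulnS. Qed.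

Lemma dotv_ensemble_inl s v : dotv (ens (inl (s, v))) (ens (inl (s, v))) = R.+2%:R.
Proof.
rewrite dotv_ensemble_ll (embedding_dotv (embE v)) dotv_simplex_vec //.
by rewrite !eqxx /= !naimark_mul_conj // !mulrSr; ring.
Qed.

Lemma dotv_ensemble_inr t : dotv (ens (inr t)) (ens (inr t)) = 2^-1 * V.+3%:R.
Proof.
rewrite dotv_ensemble_rr dotv_simplex_vec // eqxx !naimark_mul_conj //.
by rewrite /= !mulrSr; field.
Qed.

Lemma norm_dotv_ensemble i j : i != j -> `|dotv (ens i) (ens j)| = 1.
Proof.
have unit_lr s v t : `|dotv (ens (inl (s, v))) (ens (inr t))| = 1.
  by rewrite dotv_ensemble_lr norm_mul_conj ?norm_naimark ?norm_simplex_vec.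
case: i j => [[s v]|t] [[s' v']|t'] ij; last 3 first.
- exact: unit_lr.
- by rewrite dotvC norm_conjC unit_lr.
- have tt' : t != t' by apply: contraNneq ij => ->.
  rewrite dotv_ensemble_rr dotv_simplex_vec // (negbTE tt') /=.
  by rewrite (_ : _ + _ = b t * (b t')^*) ?norm_mul_conj ?norm_naimark //; field.
rewrite dotv_ensemble_ll; case: (eqVneq v v') ij => [<- ij|vv' _].
  have ss' : s != s' by apply: contraNneq ij => ->.
  rewrite (embedding_dotv (embE v)) dotv_simplex_vec // (negbTE ss') /=.
  by rewrite (_ : _ + _ = a s * (a s')^*) ?norm_mul_conj ?norm_naimark //; ring.
have [_ _ pair1] := sts.
have [r [r' ->]] := embedding_meet (embE v) (embE v') (pair1 _ _ vv').
by rewrite /= !mul0r addr0 norm_mul_conj ?norm_simplex_vec.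
Qed.

Lemma ensemble_blocks_rows : frame_rows_tight ensemble_blocks (3 / 2 * V.+1%:R).
Proof.
move=> p q; rewrite big_sumType sum_prod /= exchange_big /=.
under [X in _ + X]eq_bigr do rewrite mxE mul0r.
rewrite big1_eq addr0.
under eq_bigr do rewrite (embedding_rows (embE _) (simplex_vec_rows had1 k1)).
rewrite -!mulr_suml sum_indicator; have [_ blk3 _] := sts.
have /set0Pn[v _] : blk p != set0 by rewrite -card_gt0 blk3.
by rewrite blk3 (steiner_points_natr v); field.
Qed.

Lemma ensemble_points_rows : frame_rows_tight ensemble_points (3 / 2 * V.+1%:R).
Proof.
move=> w w'; rewrite big_sumType sum_prod /= exchange_big /=.
have inl_term (s : 'I_R.+1) (v : 'I_V) : ((sqrtC 2 * a s) *: delta_mx v 0) w 0 *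
    (((sqrtC 2 * a s) *: delta_mx v 0) w' 0)^* = (w == v)%:R * ((w' == v)%:R * 2).
  rewrite !mxE !eqxx !andbT !rmorphM rmorph_nat /=.
  transitivity ((w == v)%:R * (w' == v)%:R *
    (sqrtC 2 * (sqrtC 2)^*) * (a s * (a s)^*)); first by ring.
  by rewrite naimark_mul_conj // sqrtC_mul_conj ?ler0n // mulr1 mulrA.
under eq_bigr do under eq_bigr do rewrite inl_term.
have inr_term t : (sqrtC 2^-1 *: psi t) w 0 * ((sqrtC 2^-1 *: psi t) w' 0)^* =
    2^-1 * (psi t w 0 * (psi t w' 0)^*).
  by rewrite !mxE rmorphM /= mulrACA sqrtC_mul_conj ?invr_ge0 ?ler0n.
under [X in _ + X]eq_bigr do rewrite inr_term.
rewrite -mulr_sumr simplex_vec_rows //.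
under eq_bigr do rewrite -mulr_sumr.
rewrite sum_delta_l sumr_const card_ord eq_sym -mulr_natr (steiner_points_natr w).
by field.
Qed.

Lemma ensemble_last_rows : frame_rows_tight ensemble_last (3 / 2 * V.+1%:R).
Proof.
move=> p q; rewrite !ord1 eqxx mul1r big_sumType /= big1 ?add0r => [|i _]; last first.
  by case: i => [[]] /=; rewrite mxE mul0r.
under eq_bigr do rewrite !mxE.
by rewrite sum_mul_conj sqrtC_mul_conj ?divr_ge0 ?ler0n // naimark_rows.
Qed.

Lemma ensemble_blocks_points_orth : frame_rows_orth ensemble_blocks ensemble_points.
Proof.
move=> p w; rewrite big_sumType sum_prod /= exchange_big /=.
rewrite [X in _ + X]big1 ?addr0 => [|t _]; last by rewrite mxE mul0r.
have inl_term (s : 'I_R.+1) (v : 'I_V) :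
    (E v *m phi s) p 0 * (((sqrtC 2 * a s) *: delta_mx v 0) w 0)^* =
    (w == v)%:R * ((sqrtC 2)^* * ((E v *m phi s) p 0 * (a s)^*)).
  rewrite [X in _ * X^*]mxE [delta_mx v 0 w 0]mxE eqxx andbT.
  by rewrite !rmorphM rmorph_nat /=; ring.
under eq_bigr do under eq_bigr do rewrite inl_term.
under eq_bigr do rewrite -mulr_sumr.
by rewrite sum_delta_l -mulr_sumr (embedding_orth_rows (embE w)) ?mulr0 //;
  apply: simplex_vec_naimark_rows.
Qed.

Lemma ensemble_blocks_last_orth : frame_rows_orth ensemble_blocks ensemble_last.
Proof.
move=> p q; rewrite big1 // => -[[s v]|t] _ /=.
  by rewrite [X in _ * X^*]mxE conjC0 mulr0.
by rewrite [X in X * _]mxE mul0r.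
Qed.

Lemma ensemble_points_last_orth : frame_rows_orth ensemble_points ensemble_last.
Proof.
move=> w q; rewrite big_sumType /= big1 ?add0r => [|[s v] _]; last first.
  by rewrite [X in _ * X^*]mxE conjC0 mulr0.
under eq_bigr do rewrite [X in _ * X^*]mxE [X in X * _]mxE.
by rewrite sum_mul_conj simplex_vec_naimark_rows ?mulr0.
Qed.

Lemma ensemble_tight x : \sum_i dotv x (ens i) *: ens i = (3 / 2 * V.+1%:R) *: x.
Proof.
under eq_bigr do rewrite ensembleE; apply: tight_frame_of_rows.
apply: frame_rows_tight_col_mx; first exact: ensemble_blocks_rows.
  apply: frame_rows_tight_col_mx ensemble_points_last_orth.
    exact: ensemble_points_rows.
  exact: ensemble_last_rows.
apply: frame_rows_orth_col_mx.
  exact: ensemble_blocks_points_orth.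
exact: ensemble_blocks_last_orth.
Qed.

Lemma dotv_ensemble_eq i j : dotv (ens i) (ens i) = dotv (ens j) (ens j).
Proof.
have norm_eq (v : 'I_V) : R.+2%:R = 2^-1 * V.+3%:R :> C.
  rewrite (steiner_points sts deg v) (_ : (2 * R).+4 = 2 * R.+2)%N ?natrM; last lia.
  by field.
case: i j => [[s v]|t] [[s' v']|t'];
  by rewrite ?dotv_ensemble_inl ?dotv_ensemble_inr ?(norm_eq v) ?(norm_eq v').
Qed.

Lemma ensemble_neq0 i : ens i != 0.
Proof.
have : dotv (ens i) (ens i) != 0.
  case: i => [[s v]|t]; rewrite ?dotv_ensemble_inl ?dotv_ensemble_inr ?pnatr_eq0 //.
  by rewrite mulf_neq0 ?invr_eq0 ?pnatr_eq0.
by apply: contraNneq => ->; rewrite dotv0l.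
Qed.

End Ensemble.

Theorem theorem3p1 (C : numClosedFieldType) (V nb R : nat)
  (blk : 'I_nb -> {set 'I_V}) (E : 'I_V -> 'M[C]_(nb, R))
  (H1 : 'M[C]_R.+1) (k1 : 'I_R.+1) (H2 : 'M[C]_V.+1) (k2 : 'I_V.+1) :
  is_STS blk ->
  (forall v : 'I_V, #|[set b | v \in blk b]| = R) ->
  (forall v, is_embedding blk v (E v)) ->
  is_complex_hadamard H1 ->
  is_complex_hadamard H2 ->
  is_ETF (ensemble E H1 k1 H2 k2).
Proof.
move=> sts deg embE had1 had2; split.
- exact: ensemble_neq0.
- by move=> i j; apply: (dotv_ensemble_eq _ _ sts deg).
- by move=> i j i' j' ij i'j'; rewrite !(norm_dotv_ensemble _ _ sts).
- by exists (3 / 2 * V.+1%:R); apply: (ensemble_tight _ _ sts deg).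
Qed.
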